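(* Let $\zeta: \mathrm{TVB}_2 \to \mathrm{GL}_3(\mathbb{C})$ be a complex homogeneous local representation of $\mathrm{TVB}_2$. Then $\zeta$ is equivalent to one of the following eight representations (for a $2\times 2$ matrix $M$ write $M\oplus 1=\begin{pmatrix} M & 0\\ 0 & 1\end{pmatrix}$ and $1\oplus M=\begin{pmatrix} 1 & 0\\ 0 & M\end{pmatrix}$): \begin{itemize} \item[(1)] $\zeta_1(\sigma_1)=\begin{pmatrix} d & b\\ b/x^2 & d\end{pmatrix}\oplus 1$, $\zeta_1(\rho_1)=\begin{pmatrix} 0 & x\\ 1/x & 0\end{pmatrix}\oplus 1$, $\zeta_1(\gamma_1)=\mathrm{diag}(-1,1,1)$, $\zeta_1(\gamma_2)=\mathrm{diag}(1,-1,1)$, where $b,d,x\in\mathbb{C}$, $b^2-d^2x^2\neq 0$, $x\neq 0$. \item[(2)] $\zeta_2(\sigma_1)=\begin{pmatrix} \frac{2bw+dx}{x} & b\\ \frac{b-bw^2}{x^2} & d\end{pmatrix}\oplus 1$, $\zeta_2(\rho_1)=\begin{pmatrix} w & x\\ \frac{1-w^2}{x} & -w\end{pmatrix}\oplus 1$, $\zeta_2(\gamma_1)=\zeta_2(\gamma_2)=I_3$, where $b,d,w,x\in\mathbb{C}$, $x\neq 0$, $dx+bw\neq b$ and $dx+bw\neq -b$. \item[(3)] $\zeta_3(\sigma_1)=\begin{pmatrix} a & b\\ c & d\end{pmatrix}\oplus 1$, $\zeta_3(\rho_1)=\mathrm{diag}(-1,-1,1)$, $\zeta_3(\gamma_1)=\zeta_3(\gamma_2)=I_3$,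 where $a,b,c,d\in\mathbb{C}$, $ad-bc\neq 0$. \item[(4)] $\zeta_4(\sigma_1)=\begin{pmatrix} a & b\\ c & d\end{pmatrix}\oplus 1$, $\zeta_4(\rho_1)=I_3$, $\zeta_4(\gamma_1)=\zeta_4(\gamma_2)=I_3$, where $a,b,c,d\in\mathbb{C}$, $ad-bc\neq 0$. \item[(5)] $\zeta_5(\sigma_1)=\begin{pmatrix} a & 0\\ c & d\end{pmatrix}\oplus 1$, $\zeta_5(\rho_1)=\begin{pmatrix} -1 & 0\\ \frac{2c}{d-a} & 1\end{pmatrix}\oplus 1$, $\zeta_5(\gamma_1)=\zeta_5(\gamma_2)=I_3$, where $a,c,d\in\mathbb{C}$, $ad\neq 0$, $a\neq d$. \item[(6)] $\zeta_6(\sigma_1)=\begin{pmatrix} a & 0\\ c & d\end{pmatrix}\oplus 1$, $\zeta_6(\rho_1)=\begin{pmatrix} 1 & 0\\ \frac{2c}{a-d} & -1\end{pmatrix}\oplus 1$, $\zeta_6(\gamma_1)=\zeta_6(\gamma_2)=I_3$, where $a,c,d\in\mathbb{C}$, $ad\neq 0$, $a\neq d$. \item[(7)] $\zeta_7(\sigma_1)=\mathrm{diag}(d,d,1)$, $\zeta_7(\rho_1)=\begin{pmatrix} 1 & 0\\ y & -1\end{pmatrix}\oplus 1$, $\zeta_7(\gamma_1)=\zeta_7(\gamma_2)=I_3$, where $d,y\in\mathbb{C}$, $d\neq 0$. \item[(8)] $\zeta_8(\sigma_1)=\mathrm{diag}(d,d,1)$, $\zeta_8(\rho_1)=\begin{pmatrix}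 -1 & 0\\ y & 1\end{pmatrix}\oplus 1$, $\zeta_8(\gamma_1)=\zeta_8(\gamma_2)=I_3$, where $d,y\in\mathbb{C}$, $d\neq 0$. \end{itemize}
   Context: The twisted virtual braid group $\mathrm{TVB}_2$ is the group with generators $\sigma_1,\rho_1,\gamma_1,\gamma_2$ and defining relations $\rho_1^2=1$, $\gamma_1^2=\gamma_2^2=1$, $\gamma_1\gamma_2=\gamma_2\gamma_1$, $\rho_1\gamma_1=\gamma_2\rho_1$, $\rho_1\sigma_1\rho_1=\gamma_2\gamma_1\sigma_1\gamma_1\gamma_2$. A complex local representation $\zeta:\mathrm{TVB}_2\to \mathrm{GL}_3(\mathbb{C})$ is a group homomorphism of the form $\zeta(\sigma_1)=S\oplus 1$, $\zeta(\rho_1)=R\oplus 1$, $\zeta(\gamma_1)=G_1\oplus 1$, $\zeta(\gamma_2)=1\oplus G_2$ with $S,R,G_1,G_2\in \mathrm{GL}_2(\mathbb{C})$, where $M\oplus 1$ is the block-diagonal matrix with blocks $M$ and $1$ and $1\oplus M$ the block-diagonal matrix with blocks $1$ and $M$. It is homogeneous if $G_1=G_2$. Two representations are equivalent if they are conjugate by a fixed invertible matrix. *)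

(* complex numbers C = R[i] over an arbitrary realType R
   (any two realTypes are isomorphic, so R[i] is the field of complex numbers). *)
From HB Require Import structures.
From mathcomp Require Import all_boot all_order all_algebra.
From mathcomp Require Import complex.
From mathcomp Require Import reals.
Set Implicit Arguments. Unset Strict Implicit. Unset Printing Implicit Defensive.
Import Order.TTheory GRing.Theory Num.Theory.
Local Open Scope ring_scope.

Inductive gen := sig1 | rho1 | gam1 | gam2.

Section Defs.
Variable C : fieldType.

Definition mx2 (a b c d : C) : 'M[C]_2 :=
  \matrix_(i < 2, j < 2)
    if (i == 0 :> nat) then (if (j == 0 :> nat) then a else b)
    else (if (j == 0 :> nat) then c else d).

Definition dsumr (M : 'M[C]_2) : 'M[C]_3 := block_mx M 0 0 (1%:M : 'M[C]_1).
Definition dsuml (M : 'M[C]_2) : 'M[C]_3 := block_mx (1%:M : 'M[C]_1) 0 0 M.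

(* A map from the generators to GL_3(C) extends to a group homomorphism
   TVB_2 -> GL_3(C) iff the images are invertible and satisfy the defining
   relations of TVB_2. *)
Definition is_TVB2_rep (z : gen -> 'M[C]_3) : Prop :=
  (forall g, z g \in unitmx) /\
  [/\ z rho1 *m z rho1 = 1%:M,
      (z gam1 *m z gam1 = 1%:M /\ z gam2 *m z gam2 = 1%:M),
      z gam1 *m z gam2 = z gam2 *m z gam1,
      z rho1 *m z gam1 = z gam2 *m z rho1 &
      z rho1 *m z sig1 *m z rho1
        = z gam2 *m z gam1 *m z sig1 *m z gam1 *m z gam2].

Definition is_local (z : gen -> 'M[C]_3) : Prop :=
  exists S R G1 G2 : 'M[C]_2,
    [/\ S \in unitmx, R \in unitmx, G1 \in unitmx & G2 \in unitmx] /\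
    [/\ z sig1 = dsumr S, z rho1 = dsumr R, z gam1 = dsumr G1 & z gam2 = dsuml G2].

Definition is_homogeneous_local (z : gen -> 'M[C]_3) : Prop :=
  exists S R G : 'M[C]_2,
    [/\ S \in unitmx, R \in unitmx & G \in unitmx] /\
    [/\ z sig1 = dsumr S, z rho1 = dsumr R, z gam1 = dsumr G & z gam2 = dsuml G].

Definition rep_equiv (z z' : gen -> 'M[C]_3) : Prop :=
  exists P : 'M[C]_3, P \in unitmx /\ forall g, z' g = invmx P *m z g *m P.

Definition mkrep (s r g1 g2 : 'M[C]_3) : gen -> 'M[C]_3 :=
  fun g => match g with sig1 => s | rho1 => r | gam1 => g1 | gam2 => g2 end.

Definition zeta1 (b d x : C) :=
  mkrep (dsumr (mx2 d b (b / x ^+ 2) d)) (dsumr (mx2 0 x (x^-1) 0))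
        (dsumr (mx2 (-1) 0 0 1)) (dsumr (mx2 1 0 0 (-1))).
Definition zeta2 (b d w x : C) :=
  mkrep (dsumr (mx2 ((2 * b * w + d * x) / x) b ((b - b * w ^+ 2) / x ^+ 2) d))
        (dsumr (mx2 w x ((1 - w ^+ 2) / x) (- w))) 1%:M 1%:M.
Definition zeta3 (a b c d : C) :=
  mkrep (dsumr (mx2 a b c d)) (dsumr (mx2 (-1) 0 0 (-1))) 1%:M 1%:M.
Definition zeta4 (a b c d : C) :=
  mkrep (dsumr (mx2 a b c d)) 1%:M 1%:M 1%:M.
Definition zeta5 (a c d : C) :=
  mkrep (dsumr (mx2 a 0 c d)) (dsumr (mx2 (-1) 0 (2 * c / (d - a)) 1)) 1%:M 1%:M.
Definition zeta6 (a c d : C) :=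
  mkrep (dsumr (mx2 a 0 c d)) (dsumr (mx2 1 0 (2 * c / (a - d)) (-1))) 1%:M 1%:M.
Definition zeta7 (d y : C) :=
  mkrep (dsumr (mx2 d 0 0 d)) (dsumr (mx2 1 0 y (-1))) 1%:M 1%:M.
Definition zeta8 (d y : C) :=
  mkrep (dsumr (mx2 d 0 0 d)) (dsumr (mx2 (-1) 0 y 1)) 1%:M 1%:M.

End Defs.

(* The relation rho1 gam1 = gam2 rho1, read entrywise in GL_3, forces
   G = diag(g, 1), and gam1^2 = 1 gives g = 1 or g = -1; when g <> 1 it also
   kills the diagonal of R.  In both cases gam2 gam1 = (g I_2) (+) 1 is a
   scalar of square 1 on the sigma-block, so the last relation reduces to
   R S R = S: R is an involution commuting with S.  Solving these 2x2
   equations gives zeta1 when g = -1; when g = 1 it gives zeta2 if R has a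
   nonzero upper-right entry, and otherwise R is lower triangular with
   diagonal entries +-1, giving zeta3/zeta4 (R = -I, I) or zeta5..zeta8
   (R a reflection, S lower triangular, scalar or not).  In every case z is
   literally the listed representation, so the identity conjugates. *)

From HB Require Import structures.
From mathcomp Require Import all_boot all_order all_algebra.
From mathcomp Require Import complex.
From mathcomp Require Import reals.
From mathcomp Require Import ring.
Set Implicit Arguments. Unset Strict Implicit. Unset Printing Implicit Defensive.
Import Order.TTheory GRing.Theory Num.Theory.
Local Open Scope ring_scope.

Section Mx2.
Variable C : fieldType.
Implicit Types a b c d g : C.

Lemma mx2_onto (M : 'M[C]_2) : exists a b c d, M = mx2 a b c d.
Proof.
exists (M 0 0), (M 0 1), (M 1 0), (M 1 1); apply/matrixP => i j; rewrite mxE.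
by case: i => [[|[|i]] ?] //; case: j => [[|[|j]] ?] //=; congr (M _ _); apply: val_inj.
Qed.

Lemma mx2_inj a b c d a' b' c' d' :
  mx2 a b c d = mx2 a' b' c' d' -> [/\ a = a', b = b', c = c' & d = d'].
Proof. by move/matrixP => E; move: (E 0 0) (E 0 1) (E 1 0) (E 1 1); rewrite !mxE. Qed.

Lemma mx2_scalar g : g%:M = mx2 g 0 0 g.
Proof. by apply/matrixP => i j; rewrite !mxE; case: i => [[|[|i]] ?]; case: j => [[|[|j]] ?]. Qed.

Lemma mx2_mul a b c d a' b' c' d' :
  mx2 a b c d *m mx2 a' b' c' d' =
  mx2 (a * a' + b * c') (a * b' + b * d') (c * a' + d * c') (c * b' + d * d').
Proof.
apply/matrixP => i j; rewrite !mxE !big_ord_recr big_ord0 /= !mxE /= add0r.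
by case: i => [[|[|i]] ?]; case: j => [[|[|j]] ?].
Qed.

Lemma det_mx2 a b c d : \det (mx2 a b c d) = a * d - b * c.
Proof.
rewrite (expand_det_row _ 0) !big_ord_recr big_ord0 /= add0r /cofactor !det_mx11.
by rewrite !mxE /= expr0 expr1 mul1r mulN1r mulrN.
Qed.

Lemma unitmx_mx2 a b c d : (mx2 a b c d \in unitmx) = (a * d - b * c != 0).
Proof. by rewrite unitmxE det_mx2 unitfE. Qed.

End Mx2.

Section DirectSum.
Variable C : fieldType.
Implicit Types (M N : 'M[C]_2) (g : C).

Lemma dsumrM M N : dsumr M *m dsumr N = dsumr (M *m N).
Proof. by rewrite /dsumr (@mulmx_block _ 2 1 2 1 2 1) !mulmx0 !mul0mx !addr0 !add0r mul1mx. Qed.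

Lemma dsumr_inj : injective (@dsumr C).
Proof. by move=> M N /(congr1 (@ulsubmx C 2 1 2 1)); rewrite !block_mxKul. Qed.

Lemma dsumr1 : dsumr 1%:M = 1%:M :> 'M[C]_3.
Proof. by rewrite /dsumr -scalar_mx_block. Qed.

Lemma dsuml1 : dsuml 1%:M = 1%:M :> 'M[C]_3.
Proof. by rewrite /dsuml -scalar_mx_block. Qed.

(* [dsumr] and [dsuml] split 3 as 2 + 1 and 1 + 2 respectively, so their mixed
   products are computed entrywise. *)
Let mx3 (a b c d e f g h k : C) : 'M[C]_3 :=
  \matrix_(i < 3, j < 3) nth 0 (nth [::] [:: [:: a; b; c]; [:: d; e; f]; [:: g; h; k]] i) j.

Let dsumr_mx3 a b c d : dsumr (mx2 a b c d) = mx3 a b 0 c d 0 0 0 1.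
Proof.
apply/matrixP => i j; rewrite /dsumr /mx2 /mx3.
case: i => [[|[|[|i]]] ?] //; case: j => [[|[|[|j]]] ?] //;
  do ![rewrite !mxE /= | rewrite /split; case: ltnP => // ?]; by rewrite ?mxE.
Qed.

Let dsuml_mx3 a b c d : dsuml (mx2 a b c d) = mx3 1 0 0 0 a b 0 c d.
Proof.
apply/matrixP => i j; rewrite /dsuml /mx2 /mx3.
case: i => [[|[|[|i]]] ?] //; case: j => [[|[|[|j]]] ?] //;
  do ![rewrite !mxE /= | rewrite /split; case: ltnP => // ?]; by rewrite ?mxE.
Qed.

Let mx3_mul a b c d e f g h k a' b' c' d' e' f' g' h' k' :
  mx3 a b c d e f g h k *m mx3 a' b' c' d' e' f' g' h' k' =
  mx3 (a*a' + b*d' + c*g') (a*b' + b*e' + c*h') (a*c' + b*f' + c*k')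
      (d*a' + e*d' + f*g') (d*b' + e*e' + f*h') (d*c' + e*f' + f*k')
      (g*a' + h*d' + k*g') (g*b' + h*e' + k*h') (g*c' + h*f' + k*k').
Proof.
apply/matrixP => i j; rewrite !mxE !big_ord_recr big_ord0 /= !mxE /= add0r.
by case: i => [[|[|[|i]]] ?] //; case: j => [[|[|[|j]]] ?].
Qed.

Let mx3_inj a b c d e f g h k a' b' c' d' e' f' g' h' k' :
  mx3 a b c d e f g h k = mx3 a' b' c' d' e' f' g' h' k' ->
  [/\ a = a', b = b', c = c', d = d' & [/\ e = e', f = f', g = g', h = h' & k = k']].
Proof.
move/matrixP => E.
by move: (E 0 0) (E 0 1) (E 0 2) (E 1 0) (E 1 1) (E 1 2) (E 2 0) (E 2 1) (E 2 2); rewrite !mxE.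
Qed.

Lemma dsuml_diag g : dsuml (mx2 g 0 0 1) = dsumr (mx2 1 0 0 g).
Proof. by rewrite dsuml_mx3 dsumr_mx3. Qed.

Lemma dsuml_mul_dsumr_diag g :
  dsuml (mx2 g 0 0 1) *m dsumr (mx2 g 0 0 1) = dsumr g%:M.
Proof.
rewrite mx2_scalar dsuml_mx3 !dsumr_mx3 mx3_mul.
by rewrite !(mul0r, mulr0, mul1r, mulr1, addr0, add0r).
Qed.

Lemma dsumr_conj_scalar g M :
  g * g = 1 -> dsumr g%:M *m dsumr M *m dsumr g%:M = dsumr M.
Proof. by move=> gK; rewrite !dsumrM mul_scalar_mx mul_mx_scalar scalerA gK scale1r. Qed.

Lemma dsumr_dsuml_intertwine (w x v u g p q s : C) :
  w * u - x * v != 0 ->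
  dsumr (mx2 w x v u) *m dsumr (mx2 g p q s) = dsuml (mx2 g p q s) *m dsumr (mx2 w x v u) ->
  [/\ p = 0, q = 0, s = 1, w * g = w & u * g = u].
Proof.
move=> detR; rewrite !dsumr_mx3 dsuml_mx3 !mx3_mul.
rewrite !(mul0r, mulr0, mul1r, mulr1, addr0, add0r).
move=> /mx3_inj [e00 _ _ _ [e11 e12 e20 e21 e22]].
have q0 : q = 0.
  apply: contraNeq detR => q_neq0.
  have v0 : v = 0 by apply: (mulfI q_neq0); rewrite -e20 mulr0.
  have u0 : u = 0 by apply: (mulfI q_neq0); rewrite -e21 mulr0.
  by rewrite v0 u0 !mulr0 subrr.
move: e00 e11; rewrite -e12 -e22 q0 !(mulr0, addr0, add0r, mulr1) => e00 e11.
by split; rewrite // mulrC.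
Qed.

End DirectSum.

Lemma rep_equiv_eq (C : fieldType) (z z' : gen -> 'M[C]_3) : z =1 z' -> rep_equiv z z'.
Proof.
by move=> zz'; exists 1%:M; split=> [|g]; rewrite ?unitmx1 // invmx1 mul1mx mulmx1 zz'.
Qed.

Lemma sqr_eq1 (C : idomainType) (w : C) : w * w = 1 -> w = 1 \/ w = -1.
Proof.
move=> /eqP; rewrite -expr2 sqrf_eq1 => /orP[] /eqP; by [left | right].
Qed.

(* As Lean's [linear_combination]: [p = q] follows from [L = R] once
   [x * (p - q) = k * (L - R)] holds identically. *)
Lemma linear_combination_eq (C : fieldType) (x k p q L R : C) :
  x != 0 -> L = R -> x * (p - q) = k * (L - R) -> p = q.
Proof.
move=> x_neq0 ->; rewrite subrr mulr0 => /eqP.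
by rewrite mulf_eq0 (negbTE x_neq0) subr_eq0 => /eqP.
Qed.

Lemma commute_of_conj_involution (C : ringType) n (R S : 'M[C]_n) :
  R *m R = 1%:M -> R *m S *m R = S -> R *m S = S *m R.
Proof. by move=> RR RSR; rewrite -{2}RSR -mulmxA RR mulmx1. Qed.

Section TrivialGamma.
Variables (C : fieldType) (z : gen -> 'M[C]_3) (a b c d w x v u : C).
Hypothesis two_neq0 : (2 : C) != 0.
Hypothesis detS : a * d - b * c != 0.
Hypothesis rhoK : mx2 w x v u *m mx2 w x v u = 1%:M.
Hypothesis rho_sig : mx2 w x v u *m mx2 a b c d = mx2 a b c d *m mx2 w x v u.
Hypotheses (z_sig : z sig1 = dsumr (mx2 a b c d)) (z_rho : z rho1 = dsumr (mx2 w x v u)).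
Hypotheses (z_gam1 : z gam1 = 1%:M) (z_gam2 : z gam2 = 1%:M).

Let rhoK_eqs :
  [/\ w * w + x * v = 1, x * (w + u) = 0, v * (w + u) = 0 & v * x + u * u = 1].
Proof.
move: rhoK; rewrite mx2_mul mx2_scalar => /mx2_inj[-> e01 e10 ->].
by split; rewrite // mulrDr; [rewrite [x * w]mulrC | rewrite [v * u]mulrC].
Qed.

Let rho_sig_eqs :
  [/\ x * c = b * v, w * b + x * d = a * x + b * u,
      v * a + u * c = c * w + d * v & v * b = c * x].
Proof.
move: rho_sig; rewrite !mx2_mul => /mx2_inj[e00 -> -> e11].
split=> //; first by apply: (addrI (w * a)); rewrite e00 [a * w]mulrC.
by apply: (addIr (u * d)); rewrite e11 [u * d]mulrC.
Qed.

Let rep_equiv_trivial_gamma (S R : 'M[C]_2) :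
  mx2 a b c d = S -> mx2 w x v u = R -> rep_equiv z (mkrep (dsumr S) (dsumr R) 1%:M 1%:M).
Proof. by move=> <- <-; apply: rep_equiv_eq; case. Qed.

Lemma trivial_gamma_offdiag : x != 0 ->
  exists b d w x : C, [/\ x != 0, d * x + b * w != b, d * x + b * w != - b
                       & rep_equiv z (zeta2 b d w x)].
Proof.
move=> x_neq0; have [r00 r01 _ _] := rhoK_eqs; have [c00 c01 _ _] := rho_sig_eqs.
have eu : u = - w by apply: (linear_combination_eq (k := 1) x_neq0 r01); ring.
have ev : v = (1 - w ^+ 2) / x by apply: (linear_combination_eq (k := 1) x_neq0 r00); field.
have ea : a = (2 * b * w + d * x) / x.
  by apply: (linear_combination_eq (k := -1) x_neq0 c01); rewrite eu; field.
have ec : c = (b - b * w ^+ 2) / x ^+ 2.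
  by apply: (linear_combination_eq (k := 1) x_neq0 c00); rewrite ev; field.
have detE : a * d - b * c = ((d * x + b * w) ^+ 2 - b ^+ 2) / x ^+ 2 by rewrite ea ec; field.
exists b, d, w, x; split=> //.
- by apply: contra detS => /eqP e; rewrite detE e subrr mul0r.
- by apply: contra detS => /eqP e; rewrite detE e sqrrN subrr mul0r.
- by apply: rep_equiv_trivial_gamma; rewrite -?ea -?ec -?ev -?eu.
Qed.

Section LowerTriangular.
Hypothesis x0 : x = 0.

Let w_sq : w * w = 1. Proof. by have [<- _ _ _] := rhoK_eqs; rewrite x0 mul0r addr0. Qed.
Let u_sq : u * u = 1. Proof. by have [_ _ _ <-] := rhoK_eqs; rewrite x0 mulr0 add0r. Qed.
Let w_neq0 : w != 0. Proof. by apply: contra_eq_neq w_sq => ->; rewrite mul0r eq_sym oner_eq0. Qed.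

Lemma trivial_gamma_scalar : u = w ->
  (exists a b c d : C, a * d - b * c != 0 /\ rep_equiv z (zeta3 a b c d)) \/
  (exists a b c d : C, a * d - b * c != 0 /\ rep_equiv z (zeta4 a b c d)).
Proof.
move=> uw; have [_ _ r10 _] := rhoK_eqs.
have v0 : v = 0.
  apply: (mulIf (mulf_neq0 two_neq0 w_neq0)); rewrite mul0r -r10 uw; ring.
have [w1|wN1] := sqr_eq1 w_sq; [right | left]; exists a, b, c, d; split=> //.
- rewrite /zeta4 -{1}dsumr1 mx2_scalar.
  by apply: rep_equiv_trivial_gamma; rewrite // x0 v0 uw w1.
- by apply: rep_equiv_trivial_gamma; rewrite // x0 v0 uw wN1.
Qed.

Section Reflection.
Hypothesis uw : u = - w.

Let b0 : b = 0.
Proof.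
have [_ c01 _ _] := rho_sig_eqs.
by apply: (linear_combination_eq (k := 1) (mulf_neq0 two_neq0 w_neq0) c01); rewrite x0 uw; ring.
Qed.

Let c10 : v * a + u * c = c * w + d * v. Proof. by have [_ _ -> _] := rho_sig_eqs. Qed.

Lemma trivial_gamma_reflection_scalar : a = d ->
  (exists d y : C, d != 0 /\ rep_equiv z (zeta7 d y)) \/
  (exists d y : C, d != 0 /\ rep_equiv z (zeta8 d y)).
Proof.
move=> ad.
have c0 : c = 0.
  by apply: (linear_combination_eq (k := -1) (mulf_neq0 two_neq0 w_neq0) c10); rewrite uw ad; ring.
have d_neq0 : d != 0 by apply: contra_neq detS => d0; rewrite ad d0 b0 !mul0r subrr.
have [w1|wN1] := sqr_eq1 w_sq; [left | right]; exists d, v; split=> //;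
  by apply: rep_equiv_trivial_gamma; rewrite ?ad ?b0 ?c0 ?x0 ?uw ?w1 ?wN1 ?opprK.
Qed.

Lemma trivial_gamma_reflection_nonscalar : a != d ->
  (exists a c d : C, [/\ a * d != 0, a != d & rep_equiv z (zeta5 a c d)]) \/
  (exists a c d : C, [/\ a * d != 0, a != d & rep_equiv z (zeta6 a c d)]).
Proof.
move=> a_neq_d; have ad_neq0 : a - d != 0 by rewrite subr_eq0.
have da_neq0 : d - a != 0 by rewrite subr_eq0 eq_sym.
have ad : a * d != 0 by move: detS; rewrite b0 mul0r subr0.
have [w1|wN1] := sqr_eq1 w_sq; [right | left]; exists a, c, d; split=> //.
- have ev : v = 2 * c / (a - d).
    by apply: (linear_combination_eq (k := 1) ad_neq0 c10); rewrite uw w1; field.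
  by apply: rep_equiv_trivial_gamma; rewrite ?b0 ?x0 ?uw ?w1 ?ev.
- have ev : v = 2 * c / (d - a).
    by apply: (linear_combination_eq (k := 1) ad_neq0 c10); rewrite uw wN1; field.
  by apply: rep_equiv_trivial_gamma; rewrite ?b0 ?x0 ?uw ?wN1 ?opprK ?ev.
Qed.

End Reflection.

Lemma trivial_gamma_lower_triangular :
  (exists a b c d : C, a * d - b * c != 0 /\ rep_equiv z (zeta3 a b c d)) \/
  (exists a b c d : C, a * d - b * c != 0 /\ rep_equiv z (zeta4 a b c d)) \/
  (exists a c d : C, [/\ a * d != 0, a != d & rep_equiv z (zeta5 a c d)]) \/
  (exists a c d : C, [/\ a * d != 0, a != d & rep_equiv z (zeta6 a c d)]) \/
  (exists d y : C, d != 0 /\ rep_equiv z (zeta7 d y)) \/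
  (exists d y : C, d != 0 /\ rep_equiv z (zeta8 d y)).
Proof.
have : u ^+ 2 == w ^+ 2 by rewrite !expr2 u_sq w_sq.
rewrite eqf_sqr => /orP[/eqP uw | /eqP uw].
  by case: (trivial_gamma_scalar uw) => ?; [left | right; left].
do 2 right; have [ad|a_neq_d] := eqVneq a d.
  by case: (trivial_gamma_reflection_scalar uw ad) => ?; [right; right; left | do 3 right].
by case: (trivial_gamma_reflection_nonscalar uw a_neq_d) => ?; [left | right; left].
Qed.

End LowerTriangular.

Lemma trivial_gamma_classification :
  (exists b d w x : C,
      [/\ x != 0, d * x + b * w != b, d * x + b * w != - b
        & rep_equiv z (zeta2 b d w x)]) \/
  (exists a b c d : C, a * d - b * c != 0 /\ rep_equiv z (zeta3 a b c d)) \/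
  (exists a b c d : C, a * d - b * c != 0 /\ rep_equiv z (zeta4 a b c d)) \/
  (exists a c d : C, [/\ a * d != 0, a != d & rep_equiv z (zeta5 a c d)]) \/
  (exists a c d : C, [/\ a * d != 0, a != d & rep_equiv z (zeta6 a c d)]) \/
  (exists d y : C, d != 0 /\ rep_equiv z (zeta7 d y)) \/
  (exists d y : C, d != 0 /\ rep_equiv z (zeta8 d y)).
Proof.
have [x0|x_neq0] := eqVneq x 0.
  by right; exact: trivial_gamma_lower_triangular.
by left; exact: trivial_gamma_offdiag.
Qed.

End TrivialGamma.

Lemma antidiagonal_rho_classification
    (C : fieldType) (z : gen -> 'M[C]_3) (a b c d x v : C) :
  a * d - b * c != 0 ->
  mx2 0 x v 0 *m mx2 0 x v 0 = 1%:M ->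
  mx2 0 x v 0 *m mx2 a b c d = mx2 a b c d *m mx2 0 x v 0 ->
  z sig1 = dsumr (mx2 a b c d) -> z rho1 = dsumr (mx2 0 x v 0) ->
  z gam1 = dsumr (mx2 (-1) 0 0 1) -> z gam2 = dsuml (mx2 (-1) 0 0 1) ->
  exists b d x : C,
    [/\ b ^+ 2 - d ^+ 2 * x ^+ 2 != 0, x != 0 & rep_equiv z (zeta1 b d x)].
Proof.
move=> detS; rewrite !mx2_mul mx2_scalar !(mul0r, mulr0, addr0, add0r).
move=> /mx2_inj[xv _ _ _] /mx2_inj[c00 c01 _ _] z_sig z_rho z_gam1 z_gam2.
have x_neq0 : x != 0 by apply: contra_eq_neq xv => ->; rewrite mul0r eq_sym oner_eq0.
have ev : v = x^-1 by apply: (mulfI x_neq0); rewrite xv mulfV.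
have ea : a = d by apply: (mulIf x_neq0); rewrite -c01 mulrC.
have ec : c = b / x ^+ 2 by apply: (mulfI x_neq0); rewrite c00 ev; field.
exists b, d, x; split=> //.
  have detE : a * d - b * c = - (b ^+ 2 - d ^+ 2 * x ^+ 2) / x ^+ 2 by rewrite ea ec; field.
  by apply: contra detS => /eqP e; rewrite detE e oppr0 mul0r.
apply: rep_equiv_eq; case=> /=; rewrite ?z_sig ?z_rho ?z_gam1 ?z_gam2 ?ea ?ec ?ev //.
by rewrite dsuml_diag.
Qed.

Theorem theorem3p1 (R : realType) (z : gen -> 'M[R[i]]_3) :
  is_TVB2_rep z -> is_homogeneous_local z ->
  (exists b d x : R[i],
      [/\ b ^+ 2 - d ^+ 2 * x ^+ 2 != 0, x != 0 & rep_equiv z (zeta1 b d x)]) \/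
  (exists b d w x : R[i],
      [/\ x != 0, d * x + b * w != b, d * x + b * w != - b
        & rep_equiv z (zeta2 b d w x)]) \/
  (exists a b c d : R[i], a * d - b * c != 0 /\ rep_equiv z (zeta3 a b c d)) \/
  (exists a b c d : R[i], a * d - b * c != 0 /\ rep_equiv z (zeta4 a b c d)) \/
  (exists a c d : R[i], [/\ a * d != 0, a != d & rep_equiv z (zeta5 a c d)]) \/
  (exists a c d : R[i], [/\ a * d != 0, a != d & rep_equiv z (zeta6 a c d)]) \/
  (exists d y : R[i], d != 0 /\ rep_equiv z (zeta7 d y)) \/
  (exists d y : R[i], d != 0 /\ rep_equiv z (zeta8 d y)).
Proof.
move=> [_ [rhoK [gamK _] gam_comm rho_gam sig_rel]].
move=> [S [Rm [G [[uS uR _] [z_sig z_rho z_gam1 z_gam2]]]]].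
have [a [b [c [d eS]]]] := mx2_onto S; have [w [x [v [u eR]]]] := mx2_onto Rm.
have [g [p [q [s eG]]]] := mx2_onto G; subst S Rm G; rewrite !unitmx_mx2 in uS uR.
move: rho_gam; rewrite z_rho z_gam1 z_gam2 => /(dsumr_dsuml_intertwine uR)[p0 q0 s1 wg ug].
subst p q s.
have gK : g * g = 1.
  move: gamK; rewrite z_gam1 dsumrM -dsumr1 => /dsumr_inj.
  by rewrite mx2_mul mx2_scalar => /mx2_inj[+ _ _ _]; rewrite mulr0 addr0.
have RR : mx2 w x v u *m mx2 w x v u = 1%:M.
  by apply: dsumr_inj; rewrite -dsumrM -z_rho dsumr1.
have RSR : mx2 w x v u *m mx2 a b c d *m mx2 w x v u = mx2 a b c d.
  apply: dsumr_inj; rewrite -!dsumrM -z_rho -z_sig sig_rel -mulmxA gam_comm.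
  by rewrite z_gam1 z_gam2 z_sig dsuml_mul_dsumr_diag dsumr_conj_scalar.
have RS := commute_of_conj_involution RR RSR.
have [g1|g_neq1] := eqVneq g 1.
  right; apply: (trivial_gamma_classification _ uS RR RS z_sig z_rho).
  - by rewrite pnatr_eq0.
  - by rewrite z_gam1 g1 -mx2_scalar dsumr1.
  - by rewrite z_gam2 g1 -mx2_scalar dsuml1.
have g1_neq0 : g - 1 != 0 by rewrite subr_eq0.
have w0 : w = 0 by apply: (mulIf g1_neq0); rewrite mul0r mulrBr mulr1 wg subrr.
have u0 : u = 0 by apply: (mulIf g1_neq0); rewrite mul0r mulrBr mulr1 ug subrr.
have gN1 : g = -1 by case: (sqr_eq1 gK) g_neq1 => ->; rewrite ?eqxx.
subst w u g; left.
exact: antidiagonal_rho_classification uS RR RS z_sig z_rho z_gam1 z_gam2.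
Qed.
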